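(* For $n\ge1$ and every $\pi\in\mathfrak{S}_n$, $$\mathsf{des}\,\pi+(31\text{-}2)\pi+1=\pi(1)+(13\text{-}2)\pi.$$
   Context: $\mathsf{des}\,\pi=\#\{i\in[n-1]:\pi(i)>\pi(i+1)\}$; $(31\text{-}2)\pi=\#\{(i,j):i+1<j\le n,\ \pi(i+1)<\pi(j)<\pi(i)\}$; $(13\text{-}2)\pi=\#\{(i,j):i+1<j\le n,\ \pi(i)<\pi(j)<\pi(i+1)\}$. *)

From mathcomp Require Import all_boot all_fingroup.
Set Implicit Arguments. Unset Strict Implicit. Unset Printing Implicit Defensive.

(* A permutation s : 'S_n acts on {0,...,n-1}.  We view it as the usual
   permutation pi of [n] = {1,...,n} via  pi(i) = s(i-1) + 1  for 1 <= i <= n. *)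
Definition pival (n : nat) (s : 'S_n) (i : nat) : nat :=
  match i with
  | 0 => 0
  | i'.+1 => if insub i' is Some j then (s j : nat).+1 else 0
  end.

Definition des (n : nat) (s : 'S_n) : nat :=
  \sum_(1 <= i < n) (pival s (i.+1) < pival s i).

Definition pat31_2 (n : nat) (s : 'S_n) : nat :=
  \sum_(1 <= i < n.+1) \sum_(i.+2 <= j < n.+1)
     ((pival s i.+1 < pival s j) && (pival s j < pival s i)).

Definition pat13_2 (n : nat) (s : 'S_n) : nat :=
  \sum_(1 <= i < n.+1) \sum_(i.+2 <= j < n.+1)
     ((pival s i < pival s j) && (pival s j < pival s i.+1)).

From mathcomp Require Import all_boot all_fingroup.
From mathcomp Require Import zify.

(* Let c(i) = #{j > i : pi(j) < pi(i)} be the number of inversions starting at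
   position i.  Comparing each later value pi(j) with pi(i) and pi(i+1) gives the
   local identity
     (13-2 at i) + c(i) = (31-2 at i) + c(i+1) + [pi(i) > pi(i+1)],
   which telescopes over i = 1, ..., n-1 to
     (13-2)pi + c(1) = (31-2)pi + des pi + c(n).
   Finally c(n) = 0 and c(1) = pi(1) - 1. *)

Definition inv_after (p : nat -> nat) (n i : nat) : nat :=
  \sum_(i.+1 <= j < n.+1) (p j < p i).

Definition pat13_at (p : nat -> nat) (n i : nat) : nat :=
  \sum_(i.+2 <= j < n.+1) ((p i < p j) && (p j < p i.+1)).

Definition pat31_at (p : nat -> nat) (n i : nat) : nat :=
  \sum_(i.+2 <= j < n.+1) ((p i.+1 < p j) && (p j < p i)).

Lemma between_addn_lt (a b x : nat) : x != a -> x != b -> a != b ->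
  ((a < x) && (x < b)) + (x < a) = ((b < x) && (x < a)) + (x < b).
Proof.
move=> /eqP xa /eqP xb /eqP ab.
have [?|?] := ltnP a x; have [?|?] := ltnP x b;
have [?|?] := ltnP b x; have [?|?] := ltnP x a; rewrite /=; lia.
Qed.

Section Telescoping.

Variables (p : nat -> nat) (n : nat).
Hypothesis p_inj : forall i j, 1 <= i <= n -> 1 <= j <= n -> p i = p j -> i = j.

Lemma pat13_at_inv_after i : 1 <= i < n ->
  pat13_at p n i + inv_after p n i =
  pat31_at p n i + inv_after p n i.+1 + (p i.+1 < p i).
Proof.
move=> /andP[i_gt0 i_lt_n].
rewrite /inv_after (@big_ltn _ _ _ i.+1) //= /pat13_at /pat31_at.
suff : \sum_(i.+2 <= j < n.+1) ((p i < p j) && (p j < p i.+1)) +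
       \sum_(i.+2 <= j < n.+1) (p j < p i) =
       \sum_(i.+2 <= j < n.+1) ((p i.+1 < p j) && (p j < p i)) +
       \sum_(i.+2 <= j < n.+1) (p j < p i.+1) by lia.
rewrite -!big_split /=; apply: eq_big_nat => j /andP[j_ge j_le].
by apply: between_addn_lt; apply/eqP => /p_inj; lia.
Qed.

Lemma telescope_pat13_pat31 k : k < n ->
  \sum_(1 <= i < k.+1) pat13_at p n i + inv_after p n 1 =
  \sum_(1 <= i < k.+1) pat31_at p n i +
  \sum_(1 <= i < k.+1) (p i.+1 < p i) + inv_after p n k.+1.
Proof.
elim: k => [|k IHk] k_lt_n; first by rewrite !big_geq.
rewrite !(@big_nat_recr _ _ _ k.+1) //=.
have := @pat13_at_inv_after k.+1 k_lt_n; have := IHk (ltnW k_lt_n); lia.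
Qed.

End Telescoping.

Lemma pival_ord (n : nat) (s : 'S_n) (k : 'I_n) : pival s k.+1 = (s k).+1.
Proof.
rewrite /=; case: insubP => [j _ val_j|]; last by rewrite ltn_ord.
by congr (s _).+1; apply: val_inj.
Qed.

Lemma pival_inj (n : nat) (s : 'S_n) i j :
  1 <= i <= n -> 1 <= j <= n -> pival s i = pival s j -> i = j.
Proof.
case: i j => [|i] [|j] // /andP[_ i_lt_n] /andP[_ j_lt_n].
rewrite -[i]/(nat_of_ord (Ordinal i_lt_n)) -[j]/(nat_of_ord (Ordinal j_lt_n)).
by rewrite !pival_ord => -[/val_inj/perm_inj ->].
Qed.

Lemma sum_ltn_nat (m n : nat) : m <= n -> \sum_(0 <= k < n) (k < m) = m.
Proof.
move=> le_mn; rewrite (@big_cat_nat _ _ _ m) //=.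
rewrite (@eq_big_nat _ _ _ 0 m _ (fun=> 1)); last by move=> i /andP[_ ->].
rewrite (@eq_big_nat _ _ _ m n _ (fun=> 0)); last first.
  by move=> i /andP[le_mi _]; rewrite ltnNge le_mi.
by rewrite !sum_nat_const_nat; lia.
Qed.

(* Reindexing by s, the values s(k) < s(0) are exactly 0, ..., s(0) - 1. *)
Lemma inv_after_pival_first (n : nat) (s : 'S_n) (n_gt0 : 0 < n) :
  inv_after (pival s) n 1 = s (Ordinal n_gt0).
Proof.
have -> : inv_after (pival s) n 1 = \sum_(1 <= j < n.+1) (pival s j < pival s 1).
  by rewrite [RHS]big_ltn // ltnn.
rewrite big_add1 succnK big_mkord.
rewrite (eq_bigr (fun k : 'I_n => nat_of_bool (s k < s (Ordinal n_gt0)))); last first.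
  by move=> k _; rewrite -[1]/(Ordinal n_gt0).+1 !pival_ord.
rewrite (reindex_perm s^-1) /=; under eq_bigr => k _ do rewrite permKV.
by rewrite -(big_mkord xpredT (fun k => nat_of_bool (k < _))) sum_ltn_nat // ltnW.
Qed.

Lemma sum_drop_empty_last_row (f : nat -> nat -> nat) (n : nat) : 1 <= n ->
  \sum_(1 <= i < n.+1) \sum_(i.+2 <= j < n.+1) f i j =
  \sum_(1 <= i < n) \sum_(i.+2 <= j < n.+1) f i j.
Proof. by move=> n_gt0; rewrite big_nat_recr //= [X in _ + X]big_geq ?addn0. Qed.

Theorem lemma5p4 (n : nat) (hn : 1 <= n) (s : 'S_n) :
  des s + pat31_2 s + 1 = pival s 1 + pat13_2 s.
Proof.
have := @telescope_pat13_pat31 (pival s) n (@pival_inj n s) n.-1.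
rewrite prednK // => /(_ (leqnn n)).
rewrite inv_after_pival_first [inv_after _ n n]big_geq // addn0.
have -> : pival s 1 = (s (Ordinal hn)).+1 by rewrite -pival_ord.
rewrite /des /pat31_2 /pat13_2 !sum_drop_empty_last_row //.
by rewrite /pat13_at /pat31_at; lia.
Qed.
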